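(* Let $P,Q$ be persistence diagrams satisfying the standing assumptions, and let $d_T^{per}(P,Q)$ be defined from a shifted quadtree as in the context (for any fixed shift). Then there is an absolute constant $C$ such that $d_W(P,Q)\le C\cdot d_T^{per}(P,Q)$.
   Context: A persistence diagram is a finite multiset of points in $\mathbb{R}^2$. Let $L=\{(x,x)\mid x\in\mathbb{R}\}$ be the diagonal and $\pi(p)=\big(\tfrac{p.x+p.y}{2},\tfrac{p.x+p.y}{2}\big)$. An augmented matching for finite multisets $A,B\subset\mathbb{R}^2$ is a subset $\Gamma\subset (A\cup\pi(B))\times(B\cup\pi(A))$ such that each element of $A$ and of $B$ (with multiplicity) appears in exactly one pair, and each pair $(a,b)$ is of the form (1) $a\in A,b\in B$, (2) $a\in A,b=\pi(a)$, or (3) $a=\pi(b),b\in B$. $d_W(P,Q)=\min_\Gamma\sum_{(p,q)\in\Gamma}\|p-q\|_2$ over augmented matchings for $P,Q$. Standing assumptions: with $X=P\uplus Q$, the minimum distance between distinct points of $X$ is $1$, the minimum distance from any point of $X$ to $L$ is $1$, $X\subseteq[0,\Delta]^2$ with $\Delta$ a power of $2$. Quadtree: $H$ is $[-\Delta,\Delta]^2$ translated by a vector with coordinates in $[0,\Delta]$ (chosen uniformly at random). For $i=-1,0,\dots,\log_2\Delta$, $G_i$ is the grid of cells of side $2^i$ obtained by repeatedly halving $H$ in each coordinate. A cell is terminal if it intersects $L$. With $P(c),Q(c)$ the number of points of $P$, $Q$ in cell $c$, $$d_T^{per}(P,Q)=\sum_{i=-1}^{\log_2\Delta}2^i\sum_{c\in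 G_i,\ c\text{ non-terminal}}|P(c)-Q(c)|.$$ *)

From HB Require Import structures.
From mathcomp Require Import all_boot all_order all_algebra.
From mathcomp Require Import boolp reals.
Set Implicit Arguments. Unset Strict Implicit. Unset Printing Implicit Defensive.
Import Order.TTheory GRing.Theory Num.Theory.
Local Open Scope ring_scope.

Section PersistenceDefs.
Variable R : realType.

Definition pt := (R * R)%type.

Definition dist (p q : pt) : R :=
  Num.sqrt ((p.1 - q.1) ^+ 2 + (p.2 - q.2) ^+ 2).

Definition proj (p : pt) : pt := ((p.1 + p.2) / 2, (p.1 + p.2) / 2).

Definition pnth (s : seq pt) (i : nat) : pt := nth (0, 0) s i.

(* An augmented matching between the multisets (lists) P and Q is encoded by
   f : index of P -> option (index of Q), injective on its Some-values:
   f i = Some j  <-> pair (P_i, Q_j)          (type (1))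
   f i = None    <-> pair (P_i, pi(P_i))      (type (2))
   j not in the range of f <-> pair (pi(Q_j), Q_j)  (type (3)). *)
Definition is_aug_matching (P Q : seq pt)
    (f : {ffun 'I_(size P) -> option 'I_(size Q)}) : bool :=
  [forall i, forall i', ((f i != None) && (f i == f i')) ==> (i == i')].

Definition matching_cost (P Q : seq pt)
    (f : {ffun 'I_(size P) -> option 'I_(size Q)}) : R :=
  \sum_(i < size P)
     (match f i with
      | Some j => dist (pnth P i) (pnth Q j)
      | None => dist (pnth P i) (proj (pnth P i))
      end)
  + \sum_(j < size Q | ~~ [exists i, f i == Some j])
       dist (proj (pnth Q j)) (pnth Q j).

Definition empty_matching (P Q : seq pt) : {ffun 'I_(size P) -> option 'I_(size Q)} :=
  [ffun => None].

(* d_W(P,Q) = minimum cost over all augmented matchings (the empty matching,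
   which is always an augmented matching, is used as the seed of the min). *)
Definition dW (P Q : seq pt) : R :=
  \big[Num.min/matching_cost (empty_matching P Q)]_(f : {ffun 'I_(size P) -> option 'I_(size Q)} | is_aug_matching f)
     matching_cost f.

(* Delta = 2^k ;  H = [v.1 - Delta, v.1 + Delta] x [v.2 - Delta, v.2 + Delta].
   Levels i = -1, ..., k are indexed by j = i + 1 in 0 .. k+1.             *)
Definition Delta (k : nat) : R := 2 ^+ k.

(* side length 2^i = 2^j / 2 of a level-j cell *)
Definition side (j : nat) : R := 2 ^+ j / 2.

(* number of cells per axis at level j: 2 Delta / 2^i = 2^(k+2-j) *)
Definition ncells (k j : nat) : nat := 2 ^ (k.+2 - j).

(* the a-th slot of the subdivision of [lo, lo + N s] into N intervals of
   length s; slots are half-open [lo + a s, lo + (a+1) s) except the last one,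
   which is closed, so the slots partition [lo, lo + N s]. *)
Definition in_slot (lo s : R) (N a : nat) (x : R) : bool :=
  ((lo + a%:R * s <= x) && (x < lo + a.+1%:R * s))
  || ((a == N.-1)%N && (x == lo + N%:R * s)).

Definition in_cell (k : nat) (v : pt) (j a b : nat) (p : pt) : bool :=
  in_slot (v.1 - Delta k) (side j) (ncells k j) a p.1
  && in_slot (v.2 - Delta k) (side j) (ncells k j) b p.2.

Definition terminal (k : nat) (v : pt) (j a b : nat) : bool :=
  `[< exists t : R,
        [/\ v.1 - Delta k + a%:R * side j <= t,
            t <= v.1 - Delta k + a.+1%:R * side j,
            v.2 - Delta k + b%:R * side j <= t &
            t <= v.2 - Delta k + b.+1%:R * side j] >].

Definition dTper (k : nat) (v : pt) (P Q : seq pt) : R :=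
  \sum_(j < k.+2) side j *
    \sum_(a < ncells k j) \sum_(b < ncells k j | ~~ terminal k v j a b)
       `| (count (in_cell k v j a b) P)%:R - (count (in_cell k v j a b) Q)%:R |.

End PersistenceDefs.

(* Build an augmented matching level by level, from the finest grid to the
   coarsest.  After level i the unmatched points lie in non-terminal cells of
   G_i, no cell holds unmatched points of both diagrams, and the matched points
   fill every non-terminal cell equally; hence at most
   T_i = sum_{c non-terminal} |P(c) - Q(c)| points are unmatched.  Level i+1
   pairs unmatched points of P and Q sharing a cell and sends unmatched points
   of terminal cells to the diagonal, each at cost at most twice the side
   2^(i+1), so it costs at most 4 * 2^i * T_i.  The finest level only pairs
   equal points, and after the coarsest level the remaining points go to the
   diagonal at cost at most Delta each.  Hence d_W <= 4 d_T^per. *)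

From Pilot Require Import Defs.
From HB Require Import structures.
From mathcomp Require Import all_boot all_order all_algebra.
From mathcomp Require Import boolp reals.
From mathcomp Require Import ring lra zify.
Set Implicit Arguments. Unset Strict Implicit. Unset Printing Implicit Defensive.
Import Order.TTheory GRing.Theory Num.Theory.
Local Open Scope ring_scope.

Section Matchings.
Variable R : realType.
Local Notation pt := (pt R).
Local Notation dist := (@dist R).
Local Notation proj := (@proj R).

Lemma dist_sym (x y : pt) : dist x y = dist y x.
Proof. by rewrite /dist; congr Num.sqrt; ring. Qed.

(* [is_aug_matching] and [matching_cost] with the point lists replaced by
   index families, so that the sizes [n], [m] can vary independently of any
   list; [matching_cost f] is [cost (pnth P) (pnth Q) f] by conversion. *)
Definition aug_matching n m (f : {ffun 'I_n -> option 'I_m}) : bool :=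
  [forall i, forall i', ((f i != None) && (f i == f i')) ==> (i == i')].

Definition cost n m (p q : nat -> pt) (f : {ffun 'I_n -> option 'I_m}) : R :=
  \sum_(i < n)
     (match f i with
      | Some j => dist (p i) (q j)
      | None => dist (p i) (proj (p i))
      end)
  + \sum_(j < m | ~~ [exists i, f i == Some j]) dist (proj (q j)) (q j).

Definition matching_le n m (p q : nat -> pt) (c : R) :=
  exists f : {ffun 'I_n -> option 'I_m}, aug_matching f /\ cost p q f <= c.

Lemma dW_le_matching P Q c :
  matching_le (size P) (size Q) (pnth P) (pnth Q) c -> dW P Q <= c.
Proof. by case=> f [af cf]; rewrite /dW (bigD1 f) //= ge_min cf. Qed.

Lemma matching_le_trans n m p q c c' :
  c <= c' -> matching_le n m p q c -> matching_le n m p q c'.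
Proof. by move=> le [f [af cf]]; exists f; split => //; apply: le_trans le. Qed.

Lemma matching_le0 p q : matching_le 0 0 p q 0.
Proof.
exists [ffun => None]; split; first by apply/forallP => -[].
by rewrite /cost !big_ord0 addr0.
Qed.

Lemma omap_lift_inj m (j0 : 'I_m.+1) : injective (omap (lift j0)).
Proof. by case=> [a|] [b|] //= /Some_inj /lift_inj ->. Qed.

Lemma omap_lift_neq m (j0 : 'I_m.+1) (o : option 'I_m) : (omap (lift j0) o == Some j0) = false.
Proof. by case: o => //= a; apply/eqP => -[/eqP]; rewrite eq_sym (negbTE (neq_lift _ _)). Qed.

Section Extension.
Variables (n m : nat) (p q : nat -> pt) (c : R).

Lemma matching_le_diagl (p' : nat -> pt) (i0 : 'I_n.+1) :
  (forall i : 'I_n, p' (lift i0 i) = p i) -> matching_le n m p q c ->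
  matching_le n.+1 m p' q (c + dist (p' i0) (proj (p' i0))).
Proof.
move=> hp [f [af cf]].
pose f' := [ffun i => if unlift i0 i is Some i' then f i' else None].
have matched j : [exists i, f' i == Some j] = [exists i, f i == Some j].
  apply/existsP/existsP => -[i]; last by exists (lift i0 i); rewrite ffunE liftK.
  by rewrite ffunE; case: (unlift i0 i) => [a|] // h; exists a.
exists f'; split.
  apply/forallP => i; apply/forallP => i'; rewrite !ffunE.
  case: unliftP => [a ->|->]; last by rewrite eqxx.
  case: unliftP => [b ->|->]; last by case: (f a).
  apply/implyP => /andP[h1 h2]; move/forallP: af => /(_ a) /forallP /(_ b).
  by rewrite h1 h2 /= => /eqP ->.
rewrite /cost (bigD1_ord i0) //= ffunE unlift_none /=.
rewrite (eq_bigl _ _ (fun j => congr1 negb (matched j))).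
under eq_bigr do rewrite ffunE liftK hp.
rewrite /cost in cf; lra.
Qed.

Lemma matching_le_diagr (q' : nat -> pt) (j0 : 'I_m.+1) :
  (forall j : 'I_m, q' (lift j0 j) = q j) -> matching_le n m p q c ->
  matching_le n m.+1 p q' (c + dist (proj (q' j0)) (q' j0)).
Proof.
move=> hq [f [af cf]].
pose f' := [ffun i => omap (lift j0) (f i)].
have matched j : [exists i, f' i == Some (lift j0 j)] = [exists i, f i == Some j].
  apply: eq_existsb => i.
  by rewrite ffunE -[Some (lift j0 j)]/(omap (lift j0) (Some j)) (inj_eq (@omap_lift_inj _ j0)).
exists f'; split.
  apply/forallP => i; apply/forallP => i'; rewrite !ffunE (inj_eq (@omap_lift_inj _ j0)).
  by move/forallP: af => /(_ i) /forallP /(_ i'); case: (f i).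
rewrite /cost (bigD1_ord j0); last first.
  by apply/existsP => -[i]; rewrite ffunE omap_lift_neq.
rewrite (eq_bigl _ _ (fun j => congr1 negb (matched j))).
rewrite (eq_bigr (fun j : 'I_m => dist (proj (q j)) (q j))); last by move=> j _; rewrite hq.
rewrite (eq_bigr (fun i => match f i with
  | Some j => dist (p i) (q j) | None => dist (p i) (proj (p i)) end)); last first.
  by move=> i _; rewrite ffunE; case: (f i) => //= a; rewrite hq.
rewrite /= /cost in cf *; lra.
Qed.

Lemma matching_le_pair (p' q' : nat -> pt) (i0 : 'I_n.+1) (j0 : 'I_m.+1) :
  (forall i : 'I_n, p' (lift i0 i) = p i) ->
  (forall j : 'I_m, q' (lift j0 j) = q j) -> matching_le n m p q c ->
  matching_le n.+1 m.+1 p' q' (c + dist (p' i0) (q' j0)).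
Proof.
move=> hp hq [f [af cf]].
pose f' := [ffun i => if unlift i0 i is Some i' then omap (lift j0) (f i') else Some j0].
have matched j : [exists i, f' i == Some (lift j0 j)] = [exists i, f i == Some j].
  apply/existsP/existsP => -[i].
    rewrite ffunE -[Some (lift j0 j)]/(omap (lift j0) (Some j)).
    case: (unlift i0 i) => [a|]; last by rewrite eq_sym omap_lift_neq.
    by rewrite (inj_eq (@omap_lift_inj _ j0)); exists a.
  by move=> /eqP fi; exists (lift i0 i); rewrite ffunE liftK fi.
exists f'; split.
  apply/forallP => i; apply/forallP => i'; rewrite !ffunE.
  case: unliftP => [a ->|->]; case: unliftP => [b ->|->] //=.
  - rewrite (inj_eq (@omap_lift_inj _ j0)) (inj_eq lift_inj).
    by move/forallP: af => /(_ a) /forallP /(_ b); case: (f a).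
  - by rewrite omap_lift_neq andbF.
  - by rewrite eq_sym omap_lift_neq.
  - by rewrite !eqxx.
rewrite /cost (bigD1_ord i0) // ffunE unlift_none.
have j0_matched : [exists i, f' i == Some j0].
  by apply/existsP; exists i0; rewrite ffunE unlift_none.
rewrite [X in _ + X]big_mkcond (bigD1_ord j0) // j0_matched -big_mkcond.
rewrite (eq_bigl _ _ (fun j => congr1 negb (matched j))).
rewrite (eq_bigr (fun j : 'I_m => dist (proj (q j)) (q j))); last by move=> j _; rewrite hq.
rewrite (eq_bigr (fun i => match f i with
  | Some j => dist (p i) (q j) | None => dist (p i) (proj (p i)) end)); last first.
  by move=> i _; rewrite ffunE liftK hp; case: (f i) => //= a; rewrite hq.
rewrite /= /cost in cf *; lra.
Qed.
End Extension.
Definition matching_seq_le (P Q : seq pt) c :=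
  matching_le (size P) (size Q) (pnth P) (pnth Q) c.

Lemma pnth_insert (P1 P2 : seq pt) x n (i0 : 'I_n.+1) :
  val i0 = size P1 -> forall i : 'I_n, pnth (P1 ++ x :: P2) (lift i0 i) = pnth (P1 ++ P2) i.
Proof.
move=> e i; rewrite /pnth /= /bump e !nth_cat.
by case: (ltnP i (size P1)) => h; [rewrite add0n h | rewrite add1n ltnNge (leqW h) /= subSn].
Qed.

Lemma pnth_size_cat (P1 P2 : seq pt) x : pnth (P1 ++ x :: P2) (size P1) = x.
Proof. by rewrite /pnth nth_cat ltnn subnn. Qed.

Lemma size_insert (P1 P2 : seq pt) x : size (P1 ++ x :: P2) = (size (P1 ++ P2)).+1.
Proof. by rewrite !size_cat /= addnS. Qed.

Lemma ord_insert (P1 P2 : seq pt) : (size P1 < (size (P1 ++ P2)).+1)%N.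
Proof. by rewrite size_cat ltnS leq_addr. Qed.

Lemma insert_diagl P1 P2 x Q c : matching_seq_le (P1 ++ P2) Q c ->
  matching_seq_le (P1 ++ x :: P2) Q (c + dist x (proj x)).
Proof.
rewrite /matching_seq_le size_insert => /(matching_le_diagl (p' := pnth (P1 ++ x :: P2))).
by move=> /(_ _ (@pnth_insert P1 P2 x _ (Ordinal (ord_insert P1 P2)) erefl)); rewrite pnth_size_cat.
Qed.

Lemma insert_diagr P Q1 Q2 y c : matching_seq_le P (Q1 ++ Q2) c ->
  matching_seq_le P (Q1 ++ y :: Q2) (c + dist (proj y) y).
Proof.
rewrite /matching_seq_le size_insert => /(matching_le_diagr (q' := pnth (Q1 ++ y :: Q2))).
by move=> /(_ _ (@pnth_insert Q1 Q2 y _ (Ordinal (ord_insert Q1 Q2)) erefl)); rewrite pnth_size_cat.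
Qed.

Lemma insert_pair P1 P2 x Q1 Q2 y c : matching_seq_le (P1 ++ P2) (Q1 ++ Q2) c ->
  matching_seq_le (P1 ++ x :: P2) (Q1 ++ y :: Q2) (c + dist x y).
Proof.
rewrite /matching_seq_le !size_insert.
move=> /(matching_le_pair (p' := pnth (P1 ++ x :: P2)) (q' := pnth (Q1 ++ y :: Q2))).
move=> /(_ _ _ (@pnth_insert P1 P2 x _ (Ordinal (ord_insert P1 P2)) erefl)
              (@pnth_insert Q1 Q2 y _ (Ordinal (ord_insert Q1 Q2)) erefl)).
by rewrite !pnth_size_cat.
Qed.

Inductive plan : seq pt -> seq pt -> R -> Prop :=
| plan_nil : plan [::] [::] 0
| plan_diagl p P Q c : plan P Q c -> plan (p :: P) Q (c + dist p (proj p))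
| plan_diagr q P Q c : plan P Q c -> plan P (q :: Q) (c + dist (proj q) q)
| plan_pair p q P Q c : plan P Q c -> plan (p :: P) (q :: Q) (c + dist p q)
| plan_perm P Q P' Q' c : perm_eq P P' -> perm_eq Q Q' -> plan P Q c -> plan P' Q' c
| plan_le P Q c c' : c <= c' -> plan P Q c -> plan P Q c'.

Lemma perm_cons_insert (p : pt) P P1 P2 :
  perm_eq (p :: P) (P1 ++ p :: P2) -> perm_eq P (P1 ++ P2).
Proof. by move/permP => h; apply/permP => a; move: (h a); rewrite /= !count_cat /=; lia. Qed.

Lemma plan_matching P Q c : plan P Q c ->
  forall P' Q', perm_eq P P' -> perm_eq Q Q' -> matching_seq_le P' Q' c.
Proof.
elim=> {P Q c}.
- move=> P' Q' /perm_size/esym/size0nil -> /perm_size/esym/size0nil ->.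
  exact: matching_le0.
- move=> p P Q c _ IH P' Q' hP hQ.
  have hp : p \in P' by rewrite -(perm_mem hP) mem_head.
  by case/splitPr: hp hP => P1 P2 /perm_cons_insert hP; apply/insert_diagl/IH.
- move=> q P Q c _ IH P' Q' hP hQ.
  have hq : q \in Q' by rewrite -(perm_mem hQ) mem_head.
  by case/splitPr: hq hQ => Q1 Q2 /perm_cons_insert hQ; apply/insert_diagr/IH.
- move=> p q P Q c _ IH P' Q' hP hQ.
  have hp : p \in P' by rewrite -(perm_mem hP) mem_head.
  have hq : q \in Q' by rewrite -(perm_mem hQ) mem_head.
  case/splitPr: hp hP => P1 P2 /perm_cons_insert hP.
  by case/splitPr: hq hQ => Q1 Q2 /perm_cons_insert hQ; apply/insert_pair/IH.
- move=> P Q P' Q' c h1 h2 _ IH P'' Q'' h3 h4.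
  by apply: IH; [exact: perm_trans h1 h3 | exact: perm_trans h2 h4].
- move=> P Q c c' le _ IH P' Q' hP hQ.
  exact: matching_le_trans le (IH _ _ hP hQ).
Qed.

Lemma dW_le_plan P Q c : plan P Q c -> dW P Q <= c.
Proof. by move=> h; apply/dW_le_matching/(plan_matching h). Qed.

Lemma plan_cat P1 Q1 c1 P2 Q2 c2 : plan P1 Q1 c1 -> plan P2 Q2 c2 ->
  plan (P1 ++ P2) (Q1 ++ Q2) (c1 + c2).
Proof.
move=> h; elim: h => {P1 Q1 c1} [|p P Q c _ IH|q P Q c _ IH|p q P Q c _ IH|
  P Q P' Q' c h1 h2 _ IH|P Q c c' le _ IH] h2'.
- by rewrite add0r.
- by rewrite addrAC; apply: plan_diagl (IH h2').
- by rewrite addrAC; apply: plan_diagr (IH h2').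
- by rewrite addrAC; apply: plan_pair (IH h2').
- by apply: plan_perm (IH h2'); rewrite perm_cat2r.
- by apply: plan_le (IH h2'); rewrite lerD2r.
Qed.

Lemma plan_pairs (L : seq (pt * pt)) (D : R) :
  (forall pr, pr \in L -> dist pr.1 pr.2 <= D) ->
  plan (map fst L) (map snd L) ((size L)%:R * D).
Proof.
elim: L => [|[x y] L IH] hL /=; first by rewrite mul0r; apply: plan_nil.
apply: plan_le (plan_pair x y (IH _)); last by move=> pr hpr; apply: hL; rewrite inE hpr orbT.
by have := hL (x, y) (mem_head _ _); rewrite -addn1 natrD /=; lra.
Qed.

Lemma plan_diagl_all (S : seq pt) (D : R) :
  (forall x, x \in S -> dist x (proj x) <= D) -> plan S [::] ((size S)%:R * D).
Proof.
elim: S => [|x S IH] hS /=; first by rewrite mul0r; apply: plan_nil.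
apply: plan_le (plan_diagl x (IH _)); last by move=> y hy; apply: hS; rewrite inE hy orbT.
by have := hS x (mem_head _ _); rewrite -addn1 natrD; lra.
Qed.

Lemma plan_diagr_all (S : seq pt) (D : R) :
  (forall x, x \in S -> dist x (proj x) <= D) -> plan [::] S ((size S)%:R * D).
Proof.
elim: S => [|x S IH] hS /=; first by rewrite mul0r; apply: plan_nil.
apply: plan_le (plan_diagr x (IH _)); last by move=> y hy; apply: hS; rewrite inE hy orbT.
by have := hS x (mem_head _ _); rewrite dist_sym -addn1 natrD; lra.
Qed.

End Matchings.

Section Slots.
Variable R : realType.
Implicit Types (lo s x : R) (N a : nat).

(* Clamped to [N - 1], so that the endpoint [lo + N s] falls in the last
   slot, which [in_slot] closes on the right. *)
Definition slot_index lo s N x : nat := minn (Num.truncn ((x - lo) / s)) N.-1.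

Lemma slot_index_lt lo s N x : (0 < N)%N -> (slot_index lo s N x < N)%N.
Proof. by rewrite /slot_index; lia. Qed.

Lemma in_slotE lo s N a x : 0 < s -> (0 < N)%N -> lo <= x <= lo + N%:R * s ->
  (a < N)%N -> in_slot lo s N a x = (a == slot_index lo s N x).
Proof.
move=> s0 N0 /andP[h1 h2] aN; set y := (x - lo) / s.
have y0 : 0 <= y by rewrite /y divr_ge0 // ?subr_ge0 // ltW.
have E1 r : (lo + r * s <= x) = (r <= y).
  by rewrite /y ler_pdivlMr //; apply/idP/idP => ?; lra.
have E2 r : (x < lo + r * s) = (y < r).
  by rewrite /y ltr_pdivrMr //; apply/idP/idP => ?; lra.
have E3 : (x == lo + N%:R * s) = (y == N%:R).
  apply/eqP/eqP => e; first by rewrite /y e; field; rewrite gt_eqF.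
  move: e; rewrite /y => /(congr1 (fun t => t * s)); rewrite mulfVK ?gt_eqF //; lra.
have yN : y <= N%:R by rewrite /y ler_pdivrMr //; lra.
rewrite /in_slot E1 E2 E3 /slot_index -/y.
have [tN|tN] := ltnP (Num.truncn y) N.
  rewrite (_ : minn _ _ = Num.truncn y); last by apply/minn_idPl; lia.
  have yl : y < N%:R by rewrite -truncn_lt_nat.
  by rewrite (lt_eqF yl) andbF orbF -truncn_eq // eq_sym.
have yE : y = N%:R by apply/eqP; rewrite eq_le yN /= -truncn_ge_nat.
rewrite (_ : minn _ _ = N.-1); last by apply/minn_idPr; lia.
by rewrite yE eqxx andbT ltr_nat ltnS leqNgt aN andbF.
Qed.

Lemma in_slot_bounds lo s N a x : 0 <= s -> (a < N)%N -> in_slot lo s N a x ->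
  lo + a%:R * s <= x <= lo + a%:R * s + s.
Proof.
move=> s0 aN /orP[/andP[h1 h2]|/andP[/eqP ea /eqP ->]].
  by move: h2; rewrite h1 -natr1 mulrDl mul1r /=; lra.
have -> : N = a.+1 by lia.
by rewrite -natr1 mulrDl mul1r; apply/andP; split; lra.
Qed.

Lemma in_slot_half lo s N a x : 0 <= s -> in_slot lo s N.*2 a x ->
  in_slot lo (s * 2) N a./2 x.
Proof.
have E m : m%:R * (s * 2) = (m * 2)%:R * s by rewrite natrM; ring.
move=> s0 /orP[/andP[h1 h2]|/andP[/eqP ea /eqP ex]]; apply/orP.
  left; rewrite !E; apply/andP; split.
    by apply: le_trans h1; rewrite lerD2l ler_wpM2r // ler_nat -divn2; lia.
  by apply: lt_le_trans h2 _; rewrite lerD2l ler_wpM2r // ler_nat -divn2; lia.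
right; rewrite ex E muln2 eqxx andbT; apply/eqP.
by rewrite ea -divn2; lia.
Qed.

End Slots.

Section Distances.
Variable R : realType.
Local Notation pt := (pt R).
Local Notation dist := (@dist R).

Lemma sqr_le_bound (d s : R) : -s <= d <= s -> d ^+ 2 <= s ^+ 2.
Proof. by case/andP=> h1 h2; nra. Qed.

Lemma dist_le_box (x y : pt) (s : R) : 0 <= s ->
  -s <= x.1 - y.1 <= s -> -s <= x.2 - y.2 <= s -> dist x y <= Num.sqrt (2 * s ^+ 2).
Proof.
move=> s0 /sqr_le_bound h1 /sqr_le_bound h2.
by rewrite /dist ler_sqrt; [lra | nra].
Qed.

Lemma sqrt_2sqr_le (s : R) : 0 <= s -> Num.sqrt (2 * s ^+ 2) <= 2 * s.
Proof.
by move=> s0; rewrite -[leRHS]ger0_norm ?mulr_ge0 // -sqrtr_sqr ler_sqrt; nra.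
Qed.

Lemma sqrt_2sqr_half : Num.sqrt (2 * (1 / 2 : R) ^+ 2) < 1.
Proof. by rewrite -[ltRHS]sqrtr1 ltr_sqrt //; lra. Qed.

Lemma dist_proj_le (x : pt) (D : R) : 0 <= D -> -D <= x.1 - x.2 <= D ->
  dist x (proj x) <= D.
Proof.
move=> D0 /sqr_le_bound h; rewrite /dist /proj /=.
rewrite -[leRHS]ger0_norm // -sqrtr_sqr ler_sqrt; last by nra.
have -> : (x.1 - (x.1 + x.2) / 2) ^+ 2 + (x.2 - (x.1 + x.2) / 2) ^+ 2 = (x.1 - x.2) ^+ 2 / 2.
  by field.
by have := sqr_ge0 (x.1 - x.2); lra.
Qed.

Lemma dist_refl (x : pt) : dist x x = 0.
Proof. by rewrite /dist !subrr expr0n /= addr0 sqrtr0. Qed.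

End Distances.

Section Quadtree.
Variables (R : realType) (k : nat) (v : pt R).
Hypothesis hv : [/\ 0 <= v.1, v.1 <= Delta R k, 0 <= v.2 & v.2 <= Delta R k].
Local Notation side := (side R).
Local Notation dist := (@dist R).

Definition in_box (x : pt R) :=
  [/\ 0 <= x.1, x.1 <= Delta R k, 0 <= x.2 & x.2 <= Delta R k].

Definition cell (j : nat) (x : pt R) : nat * nat :=
  (slot_index (v.1 - Delta R k) (side j) (ncells k j) x.1,
   slot_index (v.2 - Delta R k) (side j) (ncells k j) x.2).

Definition terminal_cell j (c : nat * nat) := terminal k v j c.1 c.2.

Lemma Delta_gt0 : 0 < Delta R k.
Proof. by rewrite exprn_gt0. Qed.

Lemma side_gt0 j : 0 < side j.
Proof. by rewrite divr_gt0 // exprn_gt0. Qed.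

Lemma sideS j : side j.+1 = side j * 2.
Proof. by rewrite /Defs.side exprS; field. Qed.

Lemma side0 : side 0 = 1 / 2.
Proof. by rewrite /Defs.side expr0. Qed.

Lemma side_top : side k.+1 = Delta R k.
Proof. by rewrite /Defs.side /Delta exprS; field. Qed.

Lemma ncells_gt0 j : (0 < ncells k j)%N.
Proof. by rewrite expn_gt0. Qed.

Lemma ncellsS j : (j <= k)%N -> ncells k j = (ncells k j.+1).*2.
Proof. by move=> jk; rewrite /ncells -mul2n -expnS; congr (2 ^ _)%N; lia. Qed.

Lemma ncells_side j : (j <= k.+1)%N -> (ncells k j)%:R * side j = 2 * Delta R k.
Proof.
move=> jk; rewrite /ncells /Defs.side /Delta natrX mulrA -exprD subnK; last lia.
by rewrite !exprS; field.
Qed.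

Lemma cell_lt j x : ((cell j x).1 < ncells k j)%N /\ ((cell j x).2 < ncells k j)%N.
Proof. by split; apply/slot_index_lt/ncells_gt0. Qed.

Lemma in_cellE j x a b : (j <= k.+1)%N -> in_box x ->
  (a < ncells k j)%N -> (b < ncells k j)%N -> in_cell k v j a b x = (cell j x == (a, b)).
Proof.
move=> jk [x1 x1D x2 x2D] aN bN; case: hv => v1 v1D v2 v2D; have D0 := Delta_gt0.
rewrite /in_cell xpair_eqE.
rewrite (in_slotE (side_gt0 j) (ncells_gt0 j)) ?ncells_side //; last lra.
rewrite (in_slotE (side_gt0 j) (ncells_gt0 j)) ?ncells_side //; last lra.
by rewrite ![_ == a]eq_sym ![_ == b]eq_sym.
Qed.

Lemma in_cell_cell j x : (j <= k.+1)%N -> in_box x -> in_cell k v j (cell j x).1 (cell j x).2 x.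
Proof. by move=> jk hx; have [l1 l2] := cell_lt j x; rewrite in_cellE // -surjective_pairing. Qed.

Lemma cellS j x : (j <= k)%N -> in_box x -> cell j.+1 x = ((cell j x).1./2, (cell j x).2./2).
Proof.
move=> jk hx; have /andP[c1 c2] := in_cell_cell (leqW jk) hx.
have [l1 l2] := cell_lt j x.
rewrite (ncellsS jk) in c1 c2 l1 l2.
have s0 := ltW (side_gt0 j).
apply/eqP; rewrite -in_cellE // ?(-divn2, ltn_divLR) //; try lia.
by rewrite /in_cell sideS !in_slot_half.
Qed.

Lemma terminal_cellS j c : terminal_cell j c -> terminal_cell j.+1 (c.1./2, c.2./2).
Proof.
move=> /asboolP[t [h1 h2 h3 h4]]; apply/asboolP; exists t => /=.
have s0 := ltW (side_gt0 j).
have E m : m%:R * side j.+1 = (m * 2)%:R * side j by rewrite sideS natrM; ring.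
have lo m : (m./2 * 2 <= m)%N by rewrite -divn2; lia.
have hi m : (m.+1 <= (m./2).+1 * 2)%N by rewrite -divn2; lia.
rewrite !E; split.
- by apply: le_trans h1; rewrite lerD2l ler_wpM2r // ler_nat.
- by apply: le_trans h2 _; rewrite lerD2l ler_wpM2r // ler_nat.
- by apply: le_trans h3; rewrite lerD2l ler_wpM2r // ler_nat.
- by apply: le_trans h4 _; rewrite lerD2l ler_wpM2r // ler_nat.
Qed.

Lemma cell_bounds j x : (j <= k.+1)%N -> in_box x ->
  let lo1 := v.1 - Delta R k + (cell j x).1%:R * side j in
  let lo2 := v.2 - Delta R k + (cell j x).2%:R * side j in
  lo1 <= x.1 <= lo1 + side j /\ lo2 <= x.2 <= lo2 + side j.
Proof.
move=> jk hx; have /andP[c1 c2] := in_cell_cell jk hx; have [l1 l2] := cell_lt j x.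
have s0 := ltW (side_gt0 j).
by split; [exact: in_slot_bounds s0 l1 c1 | exact: in_slot_bounds s0 l2 c2].
Qed.

Lemma same_cell_box j x y : (j <= k.+1)%N -> in_box x -> in_box y -> cell j x = cell j y ->
  -side j <= x.1 - y.1 <= side j /\ -side j <= x.2 - y.2 <= side j.
Proof.
move=> jk hx hy e; have [] := cell_bounds jk hx; have [] := cell_bounds jk hy.
by rewrite e => /andP[? ?] /andP[? ?] /andP[? ?] /andP[? ?]; split; apply/andP; split; lra.
Qed.

Lemma same_cell_dist j x y : (j <= k.+1)%N -> in_box x -> in_box y -> cell j x = cell j y ->
  dist x y <= 2 * side j.
Proof.
move=> jk hx hy /(same_cell_box jk hx hy)[h1 h2].
exact: le_trans (dist_le_box (ltW (side_gt0 j)) h1 h2) (sqrt_2sqr_le (ltW (side_gt0 j))).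
Qed.

Lemma terminal_cell_diag j x : (j <= k.+1)%N -> in_box x -> terminal_cell j (cell j x) ->
  exists t, `|x.1 - t| <= side j /\ `|x.2 - t| <= side j.
Proof.
move=> jk hx /asboolP[t [h1 h2 h3 h4]]; exists t.
have [/andP[a1 a2] /andP[a3 a4]] := cell_bounds jk hx.
move: h2 h4; rewrite -!natr1 !mulrDl !mul1r => h2 h4.
by rewrite !ler_norml; split; apply/andP; split; lra.
Qed.

Lemma terminal_cell_dist_proj j x : (j <= k.+1)%N -> in_box x -> terminal_cell j (cell j x) ->
  dist x (proj x) <= 2 * side j.
Proof.
move=> jk hx /(terminal_cell_diag jk hx)[t]; rewrite !ler_norml => -[/andP[? ?] /andP[? ?]].
by apply: dist_proj_le; [rewrite mulr_ge0 // ltW // side_gt0 | apply/andP; split; lra].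
Qed.

Lemma same_cell0_dist x y : in_box x -> in_box y -> cell 0 x = cell 0 y -> dist x y < 1.
Proof.
move=> hx hy /(same_cell_box (leq0n _) hx hy); rewrite side0 => -[h1 h2].
by apply: le_lt_trans (sqrt_2sqr_half R); apply: dist_le_box h1 h2; lra.
Qed.

Lemma terminal_cell0_dist x : in_box x -> terminal_cell 0 (cell 0 x) ->
  exists t, dist x (t, t) < 1.
Proof.
move=> hx /(terminal_cell_diag (leq0n _) hx)[t]; rewrite side0 !ler_norml => -[h1 h2].
exists t; apply: le_lt_trans (sqrt_2sqr_half R).
by apply: dist_le_box; rewrite /= ?h1 ?h2 //; lra.
Qed.

Lemma dist_proj_le_side_top x : in_box x -> dist x (proj x) <= side k.+1.
Proof.
move=> [h1 h2 h3 h4]; rewrite side_top.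
by apply: dist_proj_le; [exact: ltW Delta_gt0 | apply/andP; split; lra].
Qed.

End Quadtree.

Section Pairing.
Variables (T U : eqType) (K : T -> U).

Lemma perm_cat_subl (s A B : seq T) : perm_eq s (A ++ B) -> {subset A <= s}.
Proof. by move=> /perm_mem h x hx; rewrite h mem_cat hx. Qed.

Lemma perm_cat_subr (s A B : seq T) : perm_eq s (A ++ B) -> {subset B <= s}.
Proof. by move=> /perm_mem h x hx; rewrite h mem_cat hx orbT. Qed.

Lemma greedy_pairing (A B : seq T) : exists A' B' (L : seq (T * T)),
  [/\ perm_eq A (A' ++ map fst L), perm_eq B (B' ++ map snd L),
      all (fun pr => K pr.1 == K pr.2) L &
      forall x y, x \in A' -> y \in B' -> K x != K y].
Proof.
elim: A B => [|x A IH] B; first by exists [::], B, [::]; split; rewrite ?cats0.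
have [A' [B' [L [h1 h2 h3 h4]]]] := IH B.
have [/hasP[y yin /eqP ey]|hx] := boolP (has (fun y => K y == K x) B').
  exists A', (rem y B'), ((x, y) :: L); split => /=.
  - by apply/permP => a; move/permP: h1 => /(_ a); rewrite /= !count_cat /=; lia.
  - apply/permP => a; move/permP: h2 => /(_ a); move/permP: (perm_to_rem yin) => /(_ a).
    by rewrite /= !count_cat /=; lia.
  - by rewrite ey eqxx h3.
  - by move=> x' y' hx' /mem_rem; apply: h4.
exists (x :: A'), B', L; split => //.
- by apply/permP => a; move/permP: h1 => /(_ a); rewrite /= !count_cat /=; lia.
- move=> x' y'; rewrite inE => /predU1P[-> hy|]; last exact: h4.
  by apply: contra hx => /eqP e; apply/hasP; exists y'; rewrite // e.
Qed.

Lemma count_pairs (L : seq (T * T)) (S : pred U) :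
  all (fun pr => K pr.1 == K pr.2) L ->
  count (fun x => S (K x)) (map fst L) = count (fun x => S (K x)) (map snd L).
Proof. by elim: L => [|[x y] L IH] //= /andP[/eqP -> /IH ->]. Qed.

End Pairing.

Section CellCounts.
Variable T : eqType.

Lemma sum_count_ord N (F : nat -> T -> bool) (g : T -> nat) (s : seq T) :
  (forall x, g x < N)%N ->
  (\sum_(a < N) count (fun x => (g x == a) && F a x) s = count (fun x => F (g x) x) s)%N.
Proof.
move=> hg; elim: s => [|x s IH]; first by rewrite big1.
rewrite /= big_split /= IH (bigD1 (Ordinal (hg x))) //= eqxx big1 ?addn0 // => a ne.
by rewrite (_ : g x == a = false) //; apply: contraNF ne => /eqP e; apply/eqP/val_inj.
Qed.

Lemma sum_count_cells N (S : nat -> nat -> bool) (g : T -> nat * nat) (s : seq T) :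
  (forall x, (g x).1 < N /\ (g x).2 < N)%N ->
  (\sum_(a < N) \sum_(b < N | S a b) count (fun x => g x == (a : nat, b : nat)) s =
   count (fun x => S (g x).1 (g x).2) s)%N.
Proof.
move=> hg; rewrite -(@sum_count_ord N (fun a x => S a (g x).2) (fun x => (g x).1)).
  apply: eq_bigr => a _.
  rewrite -(@sum_count_ord N (fun b x => ((g x).1 == a) && S a b) (fun x => (g x).2)).
    rewrite big_mkcond; apply: eq_bigr => b _.
    case: (S a b); last by rewrite (eq_count (a2 := pred0)) ?count_pred0 // => x; rewrite !andbF.
    by apply: eq_count => x; rewrite andbT [g x]surjective_pairing xpair_eqE andbC.
  by move=> x; case: (hg x).
by move=> x; case: (hg x).
Qed.

End CellCounts.

Lemma norm_natD_diff (R : numDomainType) (a b c : nat) : (a = 0 \/ b = 0)%N ->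
  `|((a + c)%:R : R) - (b + c)%:R| = (a + b)%:R.
Proof.
case=> ->; rewrite !add0n ?addn0 natrD.
  by rewrite opprD addrCA subrr addr0 normrN normr_nat.
by rewrite addrK normr_nat.
Qed.

Section Refinement.
Variables (R : realType) (k : nat) (v : pt R).
Local Notation pt := (pt R).
Local Notation cell := (cell k v).
Local Notation terminal_cell := (terminal_cell k v).

Definition balanced j (MP MQ : seq pt) := forall S : pred (nat * nat),
  (forall c, S c -> ~~ terminal_cell j c) ->
  count (fun x => S (cell j x)) MP = count (fun x => S (cell j x)) MQ.

Definition residual j (RP RQ : seq pt) :=
  (forall x, x \in RP ++ RQ -> ~~ terminal_cell j (cell j x)) /\
  (forall x y, x \in RP -> y \in RQ -> cell j x != cell j y).

Lemma balanced_cat j A B A' B' :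
  balanced j A B -> balanced j A' B' -> balanced j (A ++ A') (B ++ B').
Proof. by move=> h h' S hS; rewrite !count_cat h // h'. Qed.

Lemma balancedS j MP MQ :
  [/\ 0 <= v.1, v.1 <= Delta R k, 0 <= v.2 & v.2 <= Delta R k] -> (j <= k)%N ->
  {in MP ++ MQ, forall x, in_box k x} -> balanced j MP MQ -> balanced j.+1 MP MQ.
Proof.
move=> hv jk hbox hb S hS.
have parent_nonterminal c : S (c.1./2, c.2./2) -> ~~ terminal_cell j c.
  by move=> Sc; apply: contraNN (hS _ Sc); apply: terminal_cellS.
have /= := hb _ parent_nonterminal; congr (_ = _); apply: eq_in_count => x hx;
  by rewrite (cellS hv jk) //; apply: hbox; rewrite mem_cat hx ?orbT.
Qed.

Lemma count_terminal_filter j (S : pred (nat * nat)) (s : seq pt) :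
  (forall c, S c -> ~~ terminal_cell j c) ->
  count (fun x => S (cell j x)) [seq x <- s | terminal_cell j (cell j x)] = 0%N.
Proof.
move=> hS; apply/eqP; rewrite eqn0Ngt -has_count; apply/hasPn => x.
by rewrite mem_filter => /andP[tx _]; apply: contraL tx; apply: hS.
Qed.

Lemma refine_level j (RP RQ : seq pt) (D : R) : 0 <= D ->
  (forall x y, x \in RP -> y \in RQ -> cell j x = cell j y -> dist x y <= D) ->
  (forall x, x \in RP ++ RQ -> terminal_cell j (cell j x) -> dist x (proj x) <= D) ->
  exists NP NQ MP MQ, [/\ perm_eq RP (NP ++ MP), perm_eq RQ (NQ ++ MQ),
    plan MP MQ (D * (size RP + size RQ)%:R), balanced j MP MQ & residual j NP NQ].
Proof.
move=> D0 hpair hterm.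
have [RP1 [RQ1 [L [g1 g2 g3 g4]]]] := greedy_pairing (cell j) RP RQ.
pose tm x := terminal_cell j (cell j x).
pose TP := [seq x <- RP1 | tm x]; pose TQ := [seq x <- RQ1 | tm x].
have tmP : perm_eq (TP ++ [seq x <- RP1 | ~~ tm x]) RP1 by apply/permPl/perm_filterC.
have tmQ : perm_eq (TQ ++ [seq x <- RQ1 | ~~ tm x]) RQ1 by apply/permPl/perm_filterC.
exists [seq x <- RP1 | ~~ tm x], [seq x <- RQ1 | ~~ tm x], (map fst L ++ TP), (map snd L ++ TQ).
split.
- apply/permP => a; move/permP: g1 => /(_ a); move/permP: tmP => /(_ a).
  by rewrite !count_cat; lia.
- apply/permP => a; move/permP: g2 => /(_ a); move/permP: tmQ => /(_ a).
  by rewrite !count_cat; lia.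
- have pL : plan (map fst L) (map snd L) ((size L)%:R * D).
    apply: plan_pairs => pr hpr; apply: hpair.
    + exact/(perm_cat_subr g1)/map_f.
    + exact/(perm_cat_subr g2)/map_f.
    + by apply/eqP; move/allP: g3; apply.
  have pTP : plan TP [::] ((size TP)%:R * D).
    apply: plan_diagl_all => x; rewrite mem_filter => /andP[tx hx]; apply: hterm tx.
    by rewrite mem_cat (perm_cat_subl g1 hx).
  have pTQ : plan [::] TQ ((size TQ)%:R * D).
    apply: plan_diagr_all => x; rewrite mem_filter => /andP[tx hx]; apply: hterm tx.
    by rewrite mem_cat (perm_cat_subl g2 hx) orbT.
  have := plan_cat pL (plan_cat pTP pTQ); rewrite cats0 cat0s; apply: plan_le.
  rewrite -!mulrDl mulrC ler_wpM2l // -!natrD ler_nat.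
  move: (perm_size g1) (perm_size g2) (perm_size tmP) (perm_size tmQ).
  rewrite !size_cat !size_map => -> -> <- <-.
  move: (size TP) (size TQ) (size L) (size (filter _ RP1)) (size (filter _ RQ1)).
  move=> a b c d e; lia.
- by move=> S hS; rewrite !count_cat (count_pairs S g3) !count_terminal_filter.
- split; first by move=> x; rewrite mem_cat !mem_filter => /orP[] /andP[].
  by move=> x y; rewrite !mem_filter => /andP[_ hx] /andP[_ hy]; apply: g4.
Qed.

End Refinement.

Section Main.
Variables (R : realType) (k : nat) (v : pt R) (P Q : seq (pt R)).
Hypothesis hv : [/\ 0 <= v.1, v.1 <= Delta R k, 0 <= v.2 & v.2 <= Delta R k].
Hypothesis hbox : {in P ++ Q, forall x, in_box k x}.
Hypothesis hsep : forall p q, p \in P ++ Q -> q \in P ++ Q -> p != q -> 1 <= dist p q.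
Hypothesis hdiag : forall p (t : R), p \in P ++ Q -> 1 <= dist p (t, t).
Local Notation side := (side R).
Local Notation cell := (cell k v).
Local Notation terminal_cell := (terminal_cell k v).

Definition level_diff j : R :=
  \sum_(a < ncells k j) \sum_(b < ncells k j | ~~ terminal k v j a b)
     `| (count (in_cell k v j a b) P)%:R - (count (in_cell k v j a b) Q)%:R |.

Lemma dTperE : dTper k v P Q = \sum_(j < k.+2) side j * level_diff j.
Proof. by []. Qed.

Lemma in_box_permP A B : perm_eq P (A ++ B) -> {in A ++ B, forall x, in_box k x}.
Proof. by move=> /perm_mem h x; rewrite -h => hx; apply: hbox; rewrite mem_cat hx. Qed.

Lemma in_box_permQ A B : perm_eq Q (A ++ B) -> {in A ++ B, forall x, in_box k x}.
Proof. by move=> /perm_mem h x; rewrite -h => hx; apply: hbox; rewrite mem_cat hx orbT. Qed.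

(* [RP], [RQ]: points still unmatched after level [j]; [MP], [MQ]: matched. *)
Definition state j (RP RQ MP MQ : seq (pt R)) :=
  [/\ perm_eq P (RP ++ MP), perm_eq Q (RQ ++ MQ),
      plan MP MQ (4 * \sum_(i < j) side i * level_diff i),
      balanced k v j MP MQ & residual k v j RP RQ].

Lemma norm_count_diff_residual j RP RQ MP MQ (a b : 'I_(ncells k j)) : (j <= k.+1)%N ->
  perm_eq P (RP ++ MP) -> perm_eq Q (RQ ++ MQ) ->
  balanced k v j MP MQ -> residual k v j RP RQ -> ~~ terminal k v j a b ->
  `| (count (in_cell k v j a b) P)%:R - (count (in_cell k v j a b) Q)%:R : R | =
  (count (fun x => cell j x == (a : nat, b : nat)) RP +
   count (fun x => cell j x == (a : nat, b : nat)) RQ)%N%:R.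
Proof.
move=> jk hP hQ hb [_ hd] nt; set inc := fun x => cell j x == (a : nat, b : nat).
have cellE s : {in s, forall x, in_box k x} -> count (in_cell k v j a b) s = count inc s.
  by move=> hs; apply: eq_in_count => x hx; rewrite in_cellE //; apply: hs.
have bal : count inc MP = count inc MQ by apply: (hb (pred1 (a : nat, b : nat))) => c /eqP ->.
rewrite cellE; last by move=> x hx; apply: hbox; rewrite mem_cat hx.
rewrite cellE; last by move=> x hx; apply: hbox; rewrite mem_cat hx orbT.
rewrite (permP hP) (permP hQ) !count_cat bal norm_natD_diff //.
have [|] := posnP (count inc RP); first by left.
rewrite -has_count => /hasP[x hx /eqP ex].
have [|] := posnP (count inc RQ); first by right.
rewrite -has_count => /hasP[y hy /eqP ey].
by move: (hd x y hx hy); rewrite ex ey eqxx.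
Qed.

Lemma residual_size_le j RP RQ MP MQ : (j <= k.+1)%N ->
  perm_eq P (RP ++ MP) -> perm_eq Q (RQ ++ MQ) ->
  balanced k v j MP MQ -> residual k v j RP RQ ->
  ((size RP + size RQ)%:R : R) <= level_diff j.
Proof.
move=> jk hP hQ hb hr; rewrite /level_diff.
under eq_bigr => a _ do under eq_bigr => b nt do
  rewrite (norm_count_diff_residual jk hP hQ hb hr nt).
rewrite -(eq_bigr _ (fun a _ => natr_sum _ _ _ _)) -natr_sum ler_nat.
rewrite (eq_bigr _ (fun a _ => big_split _ _ _ _ _)) big_split /=.
rewrite !(sum_count_cells (fun a b => ~~ terminal k v j a b) (g := cell j)); last 2 first.
- by move=> x; apply: cell_lt.
- by move=> x; apply: cell_lt.
have [nt _] := hr.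
rewrite (eq_in_count (a2 := predT)) ?count_predT; last first.
  by move=> x hx; apply: nt; rewrite mem_cat hx.
rewrite (eq_in_count (a2 := predT)) ?count_predT //.
by move=> x hx; apply: nt; rewrite mem_cat hx orbT.
Qed.

(* Cells of level 0 have side 1/2, so they meet neither the diagonal nor two
   distinct points of [P ++ Q]: the first step matches equal points only. *)
Lemma state0 : exists RP RQ MP MQ, state 0 RP RQ MP MQ.
Proof.
have [||NP [NQ [MP [MQ [hP hQ pl hb hr]]]]] := @refine_level R k v 0 P Q 0 (lexx 0).
- move=> x y hx hy e.
  have hx' : x \in P ++ Q by rewrite mem_cat hx.
  have hy' : y \in P ++ Q by rewrite mem_cat hy orbT.
  have [<-|ne] := eqVneq x y; first by rewrite dist_refl.
  by have := hsep hx' hy' ne; have := same_cell0_dist hv (hbox hx') (hbox hy') e; lra.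
- move=> x hx /(terminal_cell0_dist hv (hbox hx))[t].
  by have := hdiag t hx; lra.
exists NP, NQ, MP, MQ; split => //.
by rewrite big_ord0 mulr0; rewrite mul0r in pl.
Qed.

Lemma stateS j RP RQ MP MQ : (j <= k)%N -> state j RP RQ MP MQ ->
  exists RP' RQ' MP' MQ', state j.+1 RP' RQ' MP' MQ'.
Proof.
move=> jk [hP hQ pl hb hr].
have boxP := in_box_permP hP; have boxQ := in_box_permQ hQ.
have boxR x : x \in RP ++ RQ -> in_box k x.
  by rewrite mem_cat => /orP[hx|hx]; [apply: boxP | apply: boxQ]; rewrite mem_cat hx.
have [||NP [NQ [MP' [MQ' [hRP hRQ pl' hb' hr']]]]] :=
  @refine_level R k v j.+1 RP RQ (2 * side j.+1) (mulr_ge0 (ler0n R 2) (ltW (side_gt0 R j.+1))).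
- move=> x y hx hy; apply: same_cell_dist => //; apply: boxR; rewrite mem_cat ?hx ?hy ?orbT //.
- by move=> x hx; apply: terminal_cell_dist_proj => //; apply: boxR.
exists NP, NQ, (MP ++ MP'), (MQ ++ MQ'); split => //.
- apply/permP => a; move/permP: hP => /(_ a); move/permP: hRP => /(_ a).
  by rewrite !count_cat; lia.
- apply/permP => a; move/permP: hQ => /(_ a); move/permP: hRQ => /(_ a).
  by rewrite !count_cat; lia.
- apply: plan_le (plan_cat pl pl'); rewrite big_ord_recr /= mulrDr lerD2l sideS.
  rewrite (_ : 2 * (side j * 2) = 4 * side j); last by ring.
  rewrite -mulrA ler_wpM2l // ler_wpM2l ?(ltW (side_gt0 R j)) //.
  exact: residual_size_le (leqW jk) hP hQ hb hr.
- apply: balanced_cat => //; apply: balancedS => // x.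
  by rewrite mem_cat => /orP[hx|hx]; [apply: boxP | apply: boxQ]; rewrite mem_cat hx orbT.
Qed.

Lemma state_top : exists RP RQ MP MQ, state k.+1 RP RQ MP MQ.
Proof.
suff: forall j, (j <= k.+1)%N -> exists RP RQ MP MQ, state j RP RQ MP MQ by apply.
elim=> [_|j IH jk]; first exact: state0.
by have [RP [RQ [MP [MQ h]]]] := IH (ltnW jk); apply: stateS h.
Qed.

Lemma dW_le_dTper : dW P Q <= 4 * dTper k v P Q.
Proof.
have [RP [RQ [MP [MQ [hP hQ pl hb hr]]]]] := state_top.
have boxP := in_box_permP hP; have boxQ := in_box_permQ hQ.
have pRP : plan RP [::] ((size RP)%:R * side k.+1).
  by apply: plan_diagl_all => x hx; apply/dist_proj_le_side_top/boxP; rewrite mem_cat hx.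
have pRQ : plan [::] RQ ((size RQ)%:R * side k.+1).
  by apply: plan_diagr_all => x hx; apply/dist_proj_le_side_top/boxQ; rewrite mem_cat hx.
have := plan_cat (plan_cat pRP pRQ) pl; rewrite cats0 cat0s => pl_all.
have hP' : perm_eq (RP ++ MP) P by rewrite perm_sym.
have hQ' : perm_eq (RQ ++ MQ) Q by rewrite perm_sym.
apply: le_trans (dW_le_plan (plan_perm hP' hQ' pl_all)) _.
rewrite dTperE [X in _ <= _ * X]big_ord_recr /= mulrDr [X in X <= _]addrC lerD2l -mulrDl -natrD.
have size_le := residual_size_le (leqnn _) hP hQ hb hr.
have side_ge0 := ltW (side_gt0 R k.+1).
rewrite mulrC; apply: le_trans (ler_wpM2l side_ge0 size_le) _.
by rewrite ler_peMl ?(mulr_ge0 side_ge0 (le_trans (ler0n _ _) size_le)) //; lra.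
Qed.

End Main.

Theorem lemma8 (R : realType) :
  exists C : R, forall (k : nat) (P Q : seq (pt R)) (v : pt R),
    (* X = P ⊎ Q: minimum distance between distinct points is 1 *)
    (forall p q, p \in P ++ Q -> q \in P ++ Q -> p != q -> 1 <= dist p q) ->
    (exists p q, [/\ p \in P ++ Q, q \in P ++ Q, p != q & dist p q = 1]) ->
    (* minimum distance from points of X to the diagonal L is 1 *)
    (forall p (t : R), p \in P ++ Q -> 1 <= dist p (t, t)) ->
    (exists p (t : R), p \in P ++ Q /\ dist p (t, t) = 1) ->
    (* X ⊆ [0, Delta]^2 with Delta = 2^k *)
    (forall p, p \in P ++ Q ->
       [/\ 0 <= p.1, p.1 <= Delta R k, 0 <= p.2 & p.2 <= Delta R k]) ->
    (* shift vector in [0, Delta]^2 *)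
    [/\ 0 <= v.1, v.1 <= Delta R k, 0 <= v.2 & v.2 <= Delta R k] ->
    dW P Q <= C * dTper k v P Q.
Proof.
exists 4 => k P Q v hsep _ hdiag _ hbox hv.
exact: dW_le_dTper hv hbox hsep hdiag.
Qed.
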